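(* Let $(\Omega,\mathcal A,\mu)$ be a measure space, $X$ a real locally convex space, and $L$ a locally convex space of $\mathcal A$-measurable functions $u:\Omega\to X$ such that $L$ is barreled, $u\mapsto\chi_Au$ is a well-defined continuous map $L\to L$ for every $A\in\mathcal A$, and $\{\chi_Au:A\in\mathcal A\}$ is bounded in $L$ for every $u\in L$. For an isotone (or antitone) net $(\Omega_\alpha)$ in $\mathcal A$ let $\lim_\alpha P_\alpha$ denote the pointwise $\sigma(L',L)$-limit of the adjoints $P_\alpha$ of $u\mapsto\chi_{\Omega_\alpha}u$. If two isotone nets $(\Omega_\alpha)$, $(\Omega'_{\alpha'})$ in $\mathcal A$ are eventually contained in each other, i.e. for every $\alpha$ there is $\alpha'_0$ with $\Omega_\alpha\subseteq\Omega'_{\alpha'}$ for all $\alpha'\ge\alpha'_0$, and for every $\alpha'$ there is $\alpha_0$ with $\Omega'_{\alpha'}\subseteq\Omega_\alpha$ for all $\alpha\ge\alpha_0$ (with reversed inclusions in the case of two antitone nets), then $\lim_\alpha P_\alpha=\lim_{\alpha'}P_{\alpha'}$. In particular, if $\mathfrak S\subset\mathcal A$ is a system of measurable sets, then the limit projector is the same for every isotone net $(\Omega_\alpha)$ with all $\Omega_\alpha\in\mathfrak S$ such that each $S\in\mathfrak S$ is eventually contained in $\Omega_\alpha$.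
   Context: The pointwise weak* limit of the adjoints exists for every isotone or antitone net and is a continuous linear projector on $L'$. *)

From HB Require Import structures.
From mathcomp Require Import all_boot all_order all_algebra.
From mathcomp Require Import all_classical all_reals all_analysis.
Set Implicit Arguments. Unset Strict Implicit. Unset Printing Implicit Defensive.
Import Order.TTheory GRing.Theory Num.Theory.
Import numFieldTopology.Exports numFieldNormedType.Exports.
Local Open Scope classical_set_scope.
Local Open Scope ring_scope.

Section Defs.
Context {R : realType}.

Definition Ameasurable {d} {Omega : measurableType d} {X : topologicalType}
  (u : Omega -> X) : Prop :=
  forall U : set X, open U -> measurable (u @^-1` U).

Definition chi {Omega : Type} {X : tvsType R} (A : set Omega) (u : Omega -> X)
  : Omega -> X := fun w => if w \in A then u w else 0.

Definition balanced {E : tvsType R} (B : set E) : Prop :=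
  forall (s : R) (x : E), `|s| <= 1 -> B x -> B (s *: x).

Definition absorbing {E : tvsType R} (B : set E) : Prop :=
  forall x : E, exists2 e : R, 0 < e & forall s : R, `|s| <= e -> B (s *: x).

Definition convexb {E : tvsType R} (B : set E) : Prop :=
  forall (x y : E) (t : R), 0 <= t -> t <= 1 -> B x -> B y ->
    B (t *: x + (1 - t) *: y).

Definition barrel {E : tvsType R} (B : set E) : Prop :=
  [/\ closed B, convexb B, absorbing B & balanced B].

Definition barreled (E : tvsType R) : Prop :=
  forall B : set E, barrel B -> nbhs (0 : E) B.

Definition tvs_bounded {E : tvsType R} (S : set E) : Prop :=
  forall U : set E, nbhs (0 : E) U ->
    exists2 t : R, 0 < t & forall x, S x -> U (t^-1 *: x).

Definition dual_elt {E : tvsType R} (phi : E -> R) : Prop :=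
  (forall (a : R) (u v : E), phi (a *: u + v) = a * phi u + phi v)
  /\ continuous phi.

Definition directed {I : Type} (le : I -> I -> Prop) : Prop :=
  [/\ inhabited I, (forall i, le i i),
      (forall i j k, le i j -> le j k -> le i k) &
      (forall i j, exists k, le i k /\ le j k)].

Definition net_cvg {I : Type} (le : I -> I -> Prop) (x : I -> R) (l : R) : Prop :=
  forall U : set R, nbhs l U -> exists i0, forall i, le i0 i -> U (x i).

Definition isotone {I T : Type} (le : I -> I -> Prop) (Om : I -> set T) : Prop :=
  forall i j, le i j -> Om i `<=` Om j.

Definition antitone {I T : Type} (le : I -> I -> Prop) (Om : I -> set T) : Prop :=
  forall i j, le i j -> Om j `<=` Om i.

(** psi is the pointwise sigma(L',L)-limit of the adjoints P_i of
    u |-> chi_{Om i} u, evaluated at phi: (P_i phi) u = phi (M (Om i) u)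
    converges to psi u for every u. *)
Definition adj_limit {L : tvsType R} {T I : Type} (M : set T -> L -> L)
  (le : I -> I -> Prop) (Om : I -> set T) (phi psi : L -> R) : Prop :=
  forall u : L, net_cvg le (fun i => phi (M (Om i) u)) (psi u).

End Defs.

From HB Require Import structures.
From mathcomp Require Import all_boot all_order all_algebra.
From mathcomp Require Import all_classical all_reals all_analysis.
From mathcomp Require Import lra.
Import Order.TTheory GRing.Theory Num.Theory.
Import numFieldTopology.Exports numFieldNormedType.Exports.
Local Open Scope classical_set_scope.
Local Open Scope ring_scope.

(** Fix u in L and phi in L'. The set function nu A := phi (chi_A u) is finitely
    additive on measurable sets, and bounded since {chi_A u} is bounded in L.
    Along an isotone net nu (Om i) is Cauchy: otherwise one extracts infinitely
    many disjoint measurable sets with |nu| > e, and collecting those of each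
    sign gives sets where nu is arbitrarily large. The pointwise limit psi of the
    adjoints is therefore defined and linear; it is continuous because |psi| <= 1
    on the polar of the pointwise bounded family {phi o chi_A}, a barrel, hence a
    neighbourhood of 0. If a second net is eventually contained in the first and
    vice versa, the values of nu along the two nets differ by nu of a set lying
    beyond an arbitrarily late tail of the first net, so the limits coincide.
    Antitone nets reduce to isotone ones through complements. *)

Section Nets.
Context {R : realType} {I : Type} {le : I -> I -> Prop}.
Hypothesis le_directed : directed le.

Definition net_filter : set_system I :=
  filter_from setT (fun i0 => [set i | le i0 i]).

Lemma net_filter_proper : ProperFilter net_filter.
Proof.
case: le_directed => [[i0]] le_refl le_trans le_dir.
apply: filter_from_proper; last by move=> i _; exists i.
apply: filter_from_filter; first by exists i0.
move=> i j _ _; have [k [ik jk]] := le_dir i j.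
by exists k => // l /= kl; split; apply: le_trans kl.
Qed.

Lemma net_cvgE (x : I -> R) (l : R) : net_cvg le x l <-> x @ net_filter --> l.
Proof.
split=> [x_l U /x_l [i0 Ui0] | x_l U /x_l [i0 _ Ui0]]; first by exists i0.
by exists i0.
Qed.

Lemma net_cvgP (x : I -> R) (l : R) :
  net_cvg le x l <-> forall e : R, 0 < e ->
    exists i0, forall i, le i0 i -> `|l - x i| < e.
Proof.
split=> [x_l e e0 | x_l U /nbhs_ballP [e /= e0 eU]].
  by have [i0 Hi0] := x_l _ (nbhsx_ballx l e e0); exists i0.
by have [i0 Hi0] := x_l e e0; exists i0 => i /Hi0 xie; apply: eU.
Qed.

Lemma net_cvg_unique (x : I -> R) (l1 l2 : R) :
  net_cvg le x l1 -> net_cvg le x l2 -> l1 = l2.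
Proof.
have PF := net_filter_proper.
by move=> /net_cvgE x_l1 /net_cvgE x_l2; apply: cvg_unique x_l1 x_l2.
Qed.

Lemma net_cvgMD (a : R) (x y : I -> R) (lx ly : R) :
  net_cvg le x lx -> net_cvg le y ly ->
  net_cvg le (fun i => a * x i + y i) (a * lx + ly).
Proof.
have PF := net_filter_proper.
move=> /net_cvgE x_l /net_cvgE y_l; apply/net_cvgE.
by apply: cvgD => //; apply: cvgM => //; apply: cvg_cst.
Qed.

Lemma net_cvgBl (c : R) (x : I -> R) (l : R) :
  net_cvg le x l -> net_cvg le (fun i => c - x i) (c - l).
Proof.
move=> /net_cvgP x_l; apply/net_cvgP => e /x_l [i0 near_l].
by exists i0 => i /near_l; rewrite opprB (addrC (c - l)) addrA subrK distrC.
Qed.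

Lemma net_cvg_norm_le (x : I -> R) (l c : R) :
  (forall i, `|x i| <= c) -> net_cvg le x l -> `|l| <= c.
Proof.
move=> x_c /net_cvgP x_l; apply/ler_addgt0Pr => e /x_l [i0 near_l].
have [_ le_refl _ _] := le_directed; have := near_l i0 (le_refl i0).
have := x_c i0; have := ler_normD (l - x i0) (x i0); rewrite subrK.
lra.
Qed.

Lemma net_cauchy_cvg (x : I -> R) :
  (forall e : R, 0 < e -> exists i0, forall i, le i0 i -> `|x i - x i0| <= e) ->
  exists l, net_cvg le x l.
Proof.
move=> x_cauchy; have PF := net_filter_proper.
suff: cvg (x @ net_filter) by exists (lim (x @ net_filter)); apply/net_cvgE.
apply: cauchy_cvg; apply/cauchy_ballP => e e0.
have [i0 Hi0] := x_cauchy (e / 4) (divr_gt0 e0 (ltr0n _ 4)).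
exists (x @` [set i | le i0 i], x @` [set i | le i0 i]).
  by split; exists i0 => // i /= i0i; exists i.
case=> _ _ /= [[i /Hi0 xi <-] [j /Hi0 xj <-]]; rewrite /ball /=.
have -> : x i - x j = (x i - x i0) - (x j - x i0) by rewrite opprB addrA subrK.
have := ler_normB (x i - x i0) (x j - x i0).
lra.
Qed.

End Nets.

Section AdditiveSetFunction.
Context {R : realType} {d} {T : measurableType d} {nu : set T -> R}.
Hypothesis nu_additive : forall A B, measurable A -> measurable B ->
  A `&` B = set0 -> nu (A `|` B) = nu A + nu B.

Lemma additive_set0 : nu set0 = 0.
Proof.
have := nu_additive _ _ measurable0 measurable0 (setI0 set0).
by rewrite setU0 -{1}[nu set0]addr0 => /addrI <-.
Qed.

Lemma additive_subset A B : measurable A -> measurable B -> A `<=` B ->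
  nu B = nu A + nu (B `\` A).
Proof.
move=> mA mB AB; rewrite -nu_additive ?setDUK //; first exact: measurableD.
exact: setDIK.
Qed.

Lemma additive_setC A : measurable A -> nu (~` A) = nu setT - nu A.
Proof.
move=> mA; rewrite -(setUCr A) nu_additive ?setICr //; last exact: measurableC.
by rewrite addrAC subrr add0r.
Qed.

Lemma additive_bigsetU (D : nat -> set T) (P : pred nat) n :
  (forall k, measurable (D k)) -> trivIset setT D ->
  nu (\big[setU/set0]_(k < n | P k) D k) = \sum_(k < n | P k) nu (D k).
Proof.
move=> mD tD; elim: n => [|n IHn]; first by rewrite !big_ord0 additive_set0.
rewrite big_mkcond [RHS]big_mkcond !big_ord_recr /= -!big_mkcond /= -IHn.
case: ifP => Pn; last by rewrite setU0 addr0.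
rewrite nu_additive //; first exact: bigsetU_measurable.
by apply: trivIset_bigsetUI => //; apply: sub_trivIset tD.
Qed.

Hypothesis nu_bounded : exists C : R, forall A, measurable A -> `|nu A| <= C.

Lemma trivIset_additive_small (D : nat -> set T) (e : R) : 0 < e ->
  (forall k, measurable (D k)) -> trivIset setT D ->
  exists n, `|nu (D n)| <= e.
Proof.
move=> e0 mD tD; have [C nu_C] := nu_bounded; apply: contrapT => D_small.
have D_large k : e < `|nu (D k)|.
  by rewrite ltNge; apply/negP => ?; apply: D_small; exists k.
have C0 : 0 <= C := le_trans (normr_ge0 _) (nu_C _ measurable0).
have := archi_boundP (divr_ge0 (mulr_ge0 (ler0n _ 2) C0) (ltW e0)).
set n := Num.Def.archi_bound _; rewrite ltr_pdivrMr // => nCe.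
pose pos k := 0 < nu (D k).
pose P := \big[setU/set0]_(k < n | pos k) D k.
pose N := \big[setU/set0]_(k < n | ~~ pos k) D k.
have sum_abs : nu P - nu N = \sum_(k < n) `|nu (D k)|.
  rewrite additive_bigsetU // (additive_bigsetU D (fun k => ~~ pos k)) //.
  rewrite [RHS](bigID (fun k : 'I_n => pos k)) /= -sumrN.
  congr (_ + _); apply: eq_bigr => k; first by move/gtr0_norm.
  by rewrite /pos -leNgt => /ler0_norm.
have sum_ge : n%:R * e <= \sum_(k < n) `|nu (D k)|.
  apply: le_trans (_ : \sum_(k < n) e <= _); last first.
    by apply: ler_sum => k _; apply/ltW.
  by rewrite sumr_const card_ord mulr_natl.
have mU (Q : pred nat) : measurable (\big[setU/set0]_(k < n | Q k) D k).
  by apply: bigsetU_measurable => k _; apply: mD.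
have := nu_C P (mU pos); have := nu_C N (mU (fun k => ~~ pos k)).
have := ler_normB (nu P) (nu N); have := ler_norm (nu P - nu N).
lra.
Qed.

Section IsotoneNet.
Context {I : Type} {le : I -> I -> Prop} {Om : I -> set T}.
Hypotheses (le_directed : directed le) (Om_measurable : forall i, measurable (Om i))
  (Om_isotone : isotone le Om).

Lemma isotone_additive_tail_small (e : R) : 0 < e ->
  exists i0, forall i D, le i0 i -> measurable D -> D `<=` Om i ->
    D `&` Om i0 = set0 -> `|nu D| <= e.
Proof.
case: le_directed => [[j0]] le_refl le_trans _ e0.
apply: contrapT => no_tail.
have next i0 : exists p : I * set T, [/\ le i0 p.1, measurable p.2,
    p.2 `<=` Om p.1, p.2 `&` Om i0 = set0 & e < `|nu p.2|].
  apply: contrapT => no_next; apply: no_tail; exists i0 => i D i0i mD DOm DOm0.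
  by rewrite leNgt; apply/negP => eD; apply: no_next; exists (i, D).
have [f fP] := choice next.
pose s n := iter n (fun i => (f i).1) j0.
pose D n := (f (s n)).2.
have s_mono m n : (m <= n)%N -> le (s m) (s n).
  elim: n => [|n IHn]; first by rewrite leqn0 => /eqP ->.
  rewrite leq_eqVlt => /orP [/eqP -> // | /IHn sm].
  by apply: le_trans sm _; have [] := fP (s n).
have D_measurable n : measurable (D n) by have [] := fP (s n).
have D_sub n : D n `<=` Om (s n.+1) by have [] := fP (s n).
have D_disj n : D n `&` Om (s n) = set0 by have [] := fP (s n).
have D_disjoint : trivIset setT D.
  apply/trivIsetP => m n _ _; wlog mn : m n / (m < n)%N.
    move=> wlog_mn; rewrite neq_ltn => /orP [] lt.
      by apply: wlog_mn; rewrite ?ltn_eqF.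
    by rewrite setIC; apply: wlog_mn; rewrite ?ltn_eqF.
  move=> _; apply/seteqP; split => // w [/D_sub /(Om_isotone _ _ (s_mono _ _ mn))].
  by move=> wOm wD; rewrite -(D_disj n).
have [n Dn] := trivIset_additive_small _ _ e0 D_measurable D_disjoint.
have [_ _ _ _] := fP (s n); rewrite -/(D n).
by rewrite ltNge Dn.
Qed.

Lemma isotone_additive_cvg : exists l, net_cvg le (fun i => nu (Om i)) l.
Proof.
apply: net_cauchy_cvg => // e e0; have [i0 tail] := isotone_additive_tail_small _ e0.
exists i0 => i i0i; have Om_sub := Om_isotone _ _ i0i.
rewrite (additive_subset _ _ (Om_measurable i0) (Om_measurable i) Om_sub).
rewrite addrAC subrr add0r; apply: tail i0i _ _ _ => //.
  exact: measurableD.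
exact: setDKI.
Qed.

Lemma isotone_additive_cvg_cofinal {J : Type} (leJ : J -> J -> Prop)
    (Om' : J -> set T) (l : R) :
  (forall j, measurable (Om' j)) ->
  (forall i, exists j0, forall j, leJ j0 j -> Om i `<=` Om' j) ->
  (forall j, exists i0, forall i, le i0 i -> Om' j `<=` Om i) ->
  net_cvg le (fun i => nu (Om i)) l -> net_cvg leJ (fun j => nu (Om' j)) l.
Proof.
move=> Om'_measurable Om_Om' Om'_Om /net_cvgP Om_l; apply/net_cvgP => e e0.
have e20 : 0 < e / 2 by rewrite divr_gt0.
have [i_tail tail] := isotone_additive_tail_small _ e20.
have [i_l near_l] := Om_l _ e20.
have [_ _ le_trans le_dir] := le_directed.
have [k [tail_k l_k]] := le_dir i_tail i_l.
have [j0 Om_k_sub] := Om_Om' k.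
exists j0 => j j0j; have [i0 Om'_j_sub] := Om'_Om j.
have [i [i0i ki]] := le_dir i0 k.
rewrite (additive_subset _ _ (Om_measurable k) (Om'_measurable j) (Om_k_sub _ j0j)).
have small_diff : `|nu (Om' j `\` Om k)| <= e / 2.
  apply: (tail i) (le_trans _ _ _ tail_k ki) _ _ _.
  - exact: measurableD.
  - by move=> w [/(Om'_j_sub _ i0i)].
  - by apply/seteqP; split=> // w [[_ nk] /(Om_isotone _ _ tail_k)].
have := near_l _ l_k; have := ler_normB (l - nu (Om k)) (nu (Om' j `\` Om k)).
rewrite opprD addrA; lra.
Qed.

End IsotoneNet.

Section AntitoneNet.
Context {I : Type} {le : I -> I -> Prop} {Om : I -> set T}.
Hypotheses (le_directed : directed le) (Om_measurable : forall i, measurable (Om i))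
  (Om_antitone : antitone le Om).

Let Omc_measurable i : measurable (~` Om i).
Proof. exact: measurableC. Qed.

Let Omc_isotone : isotone le (fun i => ~` Om i).
Proof. by move=> i j /Om_antitone; apply: subsetC. Qed.

Lemma antitone_additive_cvg : exists l, net_cvg le (fun i => nu (Om i)) l.
Proof.
have [l Omc_l] := isotone_additive_cvg le_directed Omc_measurable Omc_isotone.
exists (nu setT - l).
rewrite (_ : (fun i => _) = fun i => nu setT - nu (~` Om i)).
  exact: net_cvgBl.
by apply/funext => i; rewrite additive_setC // subKr.
Qed.

Lemma antitone_additive_cvg_cofinal {J : Type} (leJ : J -> J -> Prop)
    (Om' : J -> set T) (l : R) :
  (forall j, measurable (Om' j)) ->
  (forall i, exists j0, forall j, leJ j0 j -> Om' j `<=` Om i) ->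
  (forall j, exists i0, forall i, le i0 i -> Om i `<=` Om' j) ->
  net_cvg le (fun i => nu (Om i)) l -> net_cvg leJ (fun j => nu (Om' j)) l.
Proof.
move=> Om'_measurable Om'_Om Om_Om' Om_l.
have Omc_l : net_cvg le (fun i => nu (~` Om i)) (nu setT - l).
  rewrite (_ : (fun i => _) = fun i => nu setT - nu (Om i)).
    exact: net_cvgBl.
  by apply/funext => i; rewrite additive_setC.
have Omc_Om'c i : exists j0, forall j, leJ j0 j -> ~` Om i `<=` ~` Om' j.
  by have [j0 sub] := Om'_Om i; exists j0 => j /sub; apply: subsetC.
have Om'c_Omc j : exists i0, forall i, le i0 i -> ~` Om' j `<=` ~` Om i.
  by have [i0 sub] := Om_Om' j; exists i0 => i /sub; apply: subsetC.
rewrite (_ : (fun j => _) = fun j => nu setT - nu (~` Om' j)); last first.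
  by apply/funext => j; rewrite additive_setC // subKr.
rewrite -[l](subKr (nu setT)); apply: net_cvgBl.
exact: (isotone_additive_cvg_cofinal le_directed Omc_measurable Omc_isotone
  _ _ _ (fun j => measurableC (Om'_measurable j)) Omc_Om'c Om'c_Omc Omc_l).
Qed.

End AntitoneNet.

End AdditiveSetFunction.

Section LinearFunctional.
Context {R : realType} {L : tvsType R} {g : L -> R}.
Hypothesis g_lin : forall (a : R) (u v : L), g (a *: u + v) = a * g u + g v.

Lemma linfun0 : g 0 = 0.
Proof.
have := g_lin 1 0 0; rewrite scale1r addr0 mul1r.
by rewrite -{1}[g 0]addr0 => /addrI <-.
Qed.

Lemma linfunZ (a : R) (u : L) : g (a *: u) = a * g u.
Proof. by rewrite -[a *: u]addr0 g_lin linfun0 addr0. Qed.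

Lemma linfunD (u v : L) : g (u + v) = g u + g v.
Proof. by rewrite -[u]scale1r g_lin mul1r scale1r. Qed.

Lemma linfun_bounded_nbhs0_continuous (B : set L) :
  nbhs 0 B -> (forall u, B u -> `|g u| <= 1) -> continuous g.
Proof.
move=> B0 gB x; apply/cvgrPdist_lt => e e0.
have e20 : 0 < e / 2 by rewrite divr_gt0.
have := nbhsT x (nbhs0Z (lt0r_neq0 e20) B0).
apply: filterS => _ [_ [u Bu <-] <-].
rewrite linfunD linfunZ opprD addrA subrr add0r normrN normrM (gtr0_norm e20).
have := gB u Bu; have := normr_ge0 (g u).
nra.
Qed.

End LinearFunctional.

Lemma polar_barrel {R : realType} {L : tvsType R} (G : set (L -> R)) :
  (forall g, G g -> dual_elt g) ->
  (forall u, exists C : R, forall g, G g -> `|g u| <= C) ->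
  barrel [set u | forall g, G g -> `|g u| <= 1].
Proof.
move=> G_dual G_bounded; split.
- have -> : [set u | forall g, G g -> `|g u| <= 1] =
      \bigcap_(g in G) (g @^-1` [set r | `|r| <= 1]).
    by apply/seteqP; split => u /= h g /h.
  apply: closed_bigI => g /G_dual [_ g_cont].
  apply: (continuous_closedP g).1 g_cont _ _.
  apply: (continuous_closedP (Num.norm : R -> R)).1 _ _ (@closed_le _ 1).
  exact: norm_continuous.
- move=> x y t t0 t1 Bx By g Gg; have [g_lin _] := G_dual g Gg.
  rewrite (linfunD g_lin) !(linfunZ g_lin); apply: le_trans (ler_normD _ _) _.
  rewrite !normrM (ger0_norm t0) (@ger0_norm _ (1 - t)) ?subr_ge0 //.
  have := Bx g Gg; have := By g Gg.
  have := normr_ge0 (g x); have := normr_ge0 (g y).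
  nra.
- move=> x; have [C gC] := G_bounded x.
  have C1 : 0 < `|C| + 1 by rewrite ltr_pwDr.
  exists (`|C| + 1)^-1; first by rewrite invr_gt0.
  move=> s s_small g Gg; have [g_lin _] := G_dual g Gg.
  rewrite (linfunZ g_lin) normrM.
  rewrite -[_^-1]mul1r ler_pdivlMr // in s_small.
  have := gC g Gg; have := ler_norm C.
  have := normr_ge0 s; have := normr_ge0 (g x); have := normr_ge0 C.
  nra.
- move=> s x s1 Bx g Gg; have [g_lin _] := G_dual g Gg.
  rewrite (linfunZ g_lin) normrM.
  have := Bx g Gg; have := normr_ge0 s; have := normr_ge0 (g x).
  nra.
Qed.

Section IndicatorMultiplication.
Context {R : realType} {d} {Omega : measurableType d} {X L : tvsType R}
  {ev : L -> (Omega -> X)} {M : set Omega -> L -> L}.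
Hypotheses (ev_inj : injective ev)
  (ev_lin : forall (a : R) (u v : L) (w : Omega),
     ev (a *: u + v) w = a *: ev u w + ev v w)
  (ev_M : forall A, measurable A -> forall u, ev (M A u) = chi A (ev u)).

Lemma chi_mult_linear A : measurable A ->
  forall (a : R) (u v : L), M A (a *: u + v) = a *: M A u + M A v.
Proof.
move=> mA a u v; apply: ev_inj; apply/funext => w.
rewrite ev_lin !ev_M // /chi ev_lin.
by case: (w \in A); rewrite // scaler0 addr0.
Qed.

Lemma chi_mult_setU A B : measurable A -> measurable B -> A `&` B = set0 ->
  forall u, M (A `|` B) u = M A u + M B u.
Proof.
move=> mA mB AB0 u; apply: ev_inj; apply/funext => w.
rewrite -[M A u]scale1r ev_lin scale1r !ev_M //; last exact: measurableU.
rewrite /chi in_setU.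
case: (boolP (w \in A)) => wA; case: (boolP (w \in B)) => wB /=;
  rewrite ?addr0 ?add0r //.
have : (A `&` B) w by split; apply/set_mem.
by rewrite AB0.
Qed.

End IndicatorMultiplication.

Section AdjointLimits.
Context {R : realType} {d} {Omega : measurableType d} {L : tvsType R}
  {M : set Omega -> L -> L}.
Hypotheses
  (M_linear : forall A, measurable A ->
     forall (a : R) (u v : L), M A (a *: u + v) = a *: M A u + M A v)
  (M_setU : forall A B, measurable A -> measurable B -> A `&` B = set0 ->
     forall u, M (A `|` B) u = M A u + M B u)
  (M_continuous : forall A, measurable A -> continuous (M A))
  (L_barreled : barreled L)
  (M_bounded : forall u, tvs_bounded [set M A u | A in measurable]).

Lemma dual_chi_mult_additive (phi : L -> R) (u : L) : dual_elt phi ->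
  forall A B, measurable A -> measurable B -> A `&` B = set0 ->
    phi (M (A `|` B) u) = phi (M A u) + phi (M B u).
Proof. by move=> [phi_lin _] A B mA mB AB0; rewrite M_setU // linfunD. Qed.

Lemma dual_chi_mult_bounded (phi : L -> R) (u : L) : dual_elt phi ->
  exists C : R, forall A, measurable A -> `|phi (M A u)| <= C.
Proof.
move=> [phi_lin phi_cont].
have [t t0 absorb] := M_bounded u _ (phi_cont 0 _ (nbhsx_ballx _ _ ltr01)).
exists t => A mA; have := absorb (M A u) (ex_intro2 _ _ A mA erefl).
rewrite /ball /= (linfun0 phi_lin) (linfunZ phi_lin) sub0r normrN normrM.
by rewrite gtr0_norm ?invr_gt0 // mulrC ltr_pdivrMr // mul1r => /ltW.
Qed.

Lemma adj_limit_exists {I : Type} {le : I -> I -> Prop} {Om : I -> set Omega}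
    {phi : L -> R} :
  directed le -> (forall i, measurable (Om i)) -> dual_elt phi ->
  (forall u, exists l, net_cvg le (fun i => phi (M (Om i) u)) l) ->
  exists2 psi, dual_elt psi & adj_limit M le Om phi psi.
Proof.
move=> le_directed Om_measurable [phi_lin phi_cont] Om_cvg.
have [psi psiP] := choice Om_cvg.
have psi_lin (a : R) u v : psi (a *: u + v) = a * psi u + psi v.
  apply: (net_cvg_unique le_directed _ _ _ (psiP (a *: u + v))).
  under eq_fun do rewrite M_linear // phi_lin.
  exact: net_cvgMD.
exists psi => //; split => //.
pose G := [set g | exists2 A, measurable A & g = fun u => phi (M A u)].
have G_dual g : G g -> dual_elt g.
  move=> [A mA ->]; split; first by move=> a u v; rewrite M_linear // phi_lin.
  by move=> x; exact: (continuous_comp (M_continuous A mA x) (phi_cont _)).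
have G_bounded u : exists C : R, forall g, G g -> `|g u| <= C.
  have [C phi_C] := dual_chi_mult_bounded phi u (conj phi_lin phi_cont).
  by exists C => _ [A mA ->]; apply: phi_C.
have polar_nbhs0 := L_barreled _ (polar_barrel _ G_dual G_bounded).
apply: (linfun_bounded_nbhs0_continuous psi_lin _ polar_nbhs0).
move=> u polar_u; apply: net_cvg_norm_le le_directed _ _ _ _ (psiP u) => i.
exact: polar_u (ex_intro2 _ _ (Om i) (Om_measurable i) erefl).
Qed.

Lemma isotone_adj_limits_agree {I J : Type} (leI : I -> I -> Prop)
    (leJ : J -> J -> Prop) (Om : I -> set Omega) (Om' : J -> set Omega) :
  directed leI -> (forall i, measurable (Om i)) -> (forall j, measurable (Om' j)) ->
  isotone leI Om ->
  (forall i, exists j0, forall j, leJ j0 j -> Om i `<=` Om' j) ->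
  (forall j, exists i0, forall i, leI i0 i -> Om' j `<=` Om i) ->
  forall phi : L -> R, dual_elt phi ->
  exists2 psi, dual_elt psi &
    adj_limit M leI Om phi psi /\ adj_limit M leJ Om' phi psi.
Proof.
move=> leI_directed Om_measurable Om'_measurable Om_isotone Om_Om' Om'_Om phi phi_dual.
have nu_additive u := dual_chi_mult_additive phi u phi_dual.
have nu_bounded u := dual_chi_mult_bounded phi u phi_dual.
have [psi psi_dual Om_psi] := adj_limit_exists leI_directed Om_measurable phi_dual
  (fun u => isotone_additive_cvg (nu_additive u) (nu_bounded u)
              leI_directed Om_measurable Om_isotone).
exists psi => //; split => // u.
exact: (isotone_additive_cvg_cofinal (nu_additive u) (nu_bounded u) leI_directed
  Om_measurable Om_isotone _ _ _ Om'_measurable Om_Om' Om'_Om (Om_psi u)).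
Qed.

Lemma antitone_adj_limits_agree {I J : Type} (leI : I -> I -> Prop)
    (leJ : J -> J -> Prop) (Om : I -> set Omega) (Om' : J -> set Omega) :
  directed leI -> (forall i, measurable (Om i)) -> (forall j, measurable (Om' j)) ->
  antitone leI Om ->
  (forall i, exists j0, forall j, leJ j0 j -> Om' j `<=` Om i) ->
  (forall j, exists i0, forall i, leI i0 i -> Om i `<=` Om' j) ->
  forall phi : L -> R, dual_elt phi ->
  exists2 psi, dual_elt psi &
    adj_limit M leI Om phi psi /\ adj_limit M leJ Om' phi psi.
Proof.
move=> leI_directed Om_measurable Om'_measurable Om_antitone Om'_Om Om_Om' phi phi_dual.
have nu_additive u := dual_chi_mult_additive phi u phi_dual.
have nu_bounded u := dual_chi_mult_bounded phi u phi_dual.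
have [psi psi_dual Om_psi] := adj_limit_exists leI_directed Om_measurable phi_dual
  (fun u => antitone_additive_cvg (nu_additive u) (nu_bounded u)
              leI_directed Om_measurable Om_antitone).
exists psi => //; split => // u.
exact: (antitone_additive_cvg_cofinal (nu_additive u) (nu_bounded u) leI_directed
  Om_measurable Om_antitone _ _ _ Om'_measurable Om'_Om Om_Om' (Om_psi u)).
Qed.

End AdjointLimits.

Theorem propositionA2 (R : realType) (d : measure_display)
  (Omega : measurableType d) (mu : {measure set Omega -> \bar R})
  (X : tvsType R) (L : tvsType R)
  (ev : L -> (Omega -> X)) (M : set Omega -> L -> L)
  (ev_inj : injective ev)
  (ev_lin : forall (a : R) (u v : L) (w : Omega),
      ev (a *: u + v) w = a *: ev u w + ev v w)
  (ev_meas : forall u : L, Ameasurable (ev u))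
  (HM : forall A : set Omega, measurable A ->
      forall u : L, ev (M A u) = chi A (ev u))
  (HMcont : forall A : set Omega, measurable A -> continuous (M A))
  (Hbarreled : barreled L)
  (Hbounded : forall u : L, tvs_bounded [set M A u | A in measurable]) :
  (* two isotone nets, eventually contained in each other *)
  (forall (I J : Type) (leI : I -> I -> Prop) (leJ : J -> J -> Prop)
          (Om : I -> set Omega) (Om' : J -> set Omega),
     directed leI -> directed leJ ->
     (forall i, measurable (Om i)) -> (forall j, measurable (Om' j)) ->
     isotone leI Om -> isotone leJ Om' ->
     (forall i, exists j0, forall j, leJ j0 j -> Om i `<=` Om' j) ->
     (forall j, exists i0, forall i, leI i0 i -> Om' j `<=` Om i) ->
     forall phi : L -> R, dual_elt phi ->
       exists2 psi : L -> R, dual_elt psi &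
         adj_limit M leI Om phi psi /\ adj_limit M leJ Om' phi psi)
  /\
  (* two antitone nets, with reversed inclusions *)
  (forall (I J : Type) (leI : I -> I -> Prop) (leJ : J -> J -> Prop)
          (Om : I -> set Omega) (Om' : J -> set Omega),
     directed leI -> directed leJ ->
     (forall i, measurable (Om i)) -> (forall j, measurable (Om' j)) ->
     antitone leI Om -> antitone leJ Om' ->
     (forall i, exists j0, forall j, leJ j0 j -> Om' j `<=` Om i) ->
     (forall j, exists i0, forall i, leI i0 i -> Om i `<=` Om' j) ->
     forall phi : L -> R, dual_elt phi ->
       exists2 psi : L -> R, dual_elt psi &
         adj_limit M leI Om phi psi /\ adj_limit M leJ Om' phi psi)
  /\
  (* a system S of measurable sets: the limit projector is the same for
     all isotone nets in S eventually containing each member of S *)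
  (forall S : set (set Omega), S `<=` measurable ->
   forall (I J : Type) (leI : I -> I -> Prop) (leJ : J -> J -> Prop)
          (Om : I -> set Omega) (Om' : J -> set Omega),
     directed leI -> directed leJ ->
     (forall i, S (Om i)) -> (forall j, S (Om' j)) ->
     isotone leI Om -> isotone leJ Om' ->
     (forall s, S s -> exists i0, forall i, leI i0 i -> s `<=` Om i) ->
     (forall s, S s -> exists j0, forall j, leJ j0 j -> s `<=` Om' j) ->
     forall phi : L -> R, dual_elt phi ->
       exists2 psi : L -> R, dual_elt psi &
         adj_limit M leI Om phi psi /\ adj_limit M leJ Om' phi psi).
Proof.
have M_linear := chi_mult_linear ev_inj ev_lin HM.
have M_setU := chi_mult_setU ev_inj ev_lin HM.
have isotone_agree := isotone_adj_limits_agree M_linear M_setU HMcont Hbarreled Hbounded.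
split; [|split].
- move=> I J leI leJ Om Om' leI_directed _ Om_measurable Om'_measurable Om_isotone _.
  exact: isotone_agree.
- move=> I J leI leJ Om Om' leI_directed _ Om_measurable Om'_measurable Om_antitone _.
  exact: antitone_adj_limits_agree.
- move=> S S_measurable I J leI leJ Om Om' leI_directed _ S_Om S_Om' Om_isotone _.
  move=> S_sub_Om S_sub_Om'; apply: isotone_agree => //.
  + by move=> i; apply/S_measurable/S_Om.
  + by move=> j; apply/S_measurable/S_Om'.
  + by move=> i; apply/S_sub_Om'/S_Om.
  + by move=> j; apply/S_sub_Om/S_Om'.
Qed.
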